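(* For every integer $n\ge 4$, $g(n,4) \ge \frac{n(n-3)}{48}$.
   Context: For integers $2\le k\le n$, let $S_n$ denote the set of permutations of $[n]=\{1,\dots,n\}$ (written as sequences), and $S_{n,k}$ the set of all sequences of $k$ distinct elements of $[n]$. A sequence $\kappa\in S_{n,k}$ is a subsequence of a permutation $\pi\in S_n$ if its elements appear in $\pi$ in the same relative order as in $\kappa$. A perfect sequence covering array ${\rm PSCA}(n,k)$ with multiplicity $\lambda$ (a positive integer) is a multiset $X$ of elements of $S_n$ such that every $\kappa\in S_{n,k}$ is a subsequence of exactly $\lambda$ elements of $X$ (counted with multiplicity). $g(n,k)$ denotes the smallest $\lambda$ for which a ${\rm PSCA}(n,k)$ with multiplicity $\lambda$ exists. *)

From mathcomp Require Import all_boot all_fingroup.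
Set Implicit Arguments. Unset Strict Implicit. Unset Printing Implicit Defensive.

Definition perm_seq (n : nat) (pi : 'S_n) : seq 'I_n := [seq pi i | i <- enum 'I_n].

Definition is_kseq (n k : nat) (kappa : seq 'I_n) : bool :=
  (size kappa == k) && uniq kappa.

Definition subseq_of_perm (n : nat) (kappa : seq 'I_n) (pi : 'S_n) : bool :=
  subseq kappa (perm_seq pi).

(* X (a multiset of permutations, represented as a list) is a PSCA(n,k)
   with multiplicity lam: every kappa in S_{n,k} is a subsequence of exactly
   lam elements of X, counted with multiplicity; lam is a positive integer. *)
Definition is_PSCA (n k lam : nat) (X : seq 'S_n) : Prop :=
  0 < lam /\
  forall kappa : seq 'I_n, is_kseq k kappa ->
    count (subseq_of_perm kappa) X = lam.

(* lam is an achievable multiplicity for a PSCA(n,k). g(n,k) is the least such lam. *)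
Definition PSCA_exists (n k lam : nat) : Prop := exists X : seq 'S_n, is_PSCA k lam X.

From mathcomp Require Import all_boot all_order all_fingroup all_algebra zify.
Set Implicit Arguments. Unset Strict Implicit. Unset Printing Implicit Defensive.
Import Order.TTheory GRing.Theory Num.Theory.

(* For a permutation pi and a pair a < b let x_pi(a, b) be +1 or -1 according
   to whether a precedes b in pi.  Since every 4-sequence of distinct points is
   a subsequence of exactly lam members of X, the Gram matrix of the vectors
   (x_pi(a, b))_(pi in X) indexed by the pairs a < b can be computed by counting
   on four points: it is 8 lam (I + D D^T), where D is the incidence matrix
   whose row at (a, b) is e_a - e_b.  This matrix is positive definite, so the
   'C(n, 2) vectors are linearly independent in a space of dimension
   |X| = 24 lam, and n (n - 3) <= n (n - 1) = 2 'C(n, 2) <= 48 lam. *)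

Section InjectiveMaps.
Variables (T1 T2 : eqType) (f : T1 -> T2).
Hypothesis f_inj : injective f.

Lemma subseq_map_inj (s1 s2 : seq T1) : subseq (map f s1) (map f s2) = subseq s1 s2.
Proof.
apply/idP/idP; last exact: map_subseq.
by case/subseqP=> m _; rewrite -map_mask => /(inj_map f_inj) ->; apply: mask_subseq.
Qed.

Lemma permutations_map (s : seq T1) : uniq s ->
  perm_eq (permutations (map f s)) (map (map f) (permutations s)).
Proof.
move=> s_uniq.
have fs_uniq : uniq (map (map f) (permutations s)).
  by rewrite map_inj_uniq ?permutations_uniq //; apply: inj_map.
have sub : {subset map (map f) (permutations s) <= permutations (map f s)}.
  by move=> _ /mapP[t + ->]; rewrite !mem_permutations => /(perm_map f).
have size_eq : size (permutations (map f s)) <= size (map (map f) (permutations s)).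
  by rewrite size_map !size_permutations ?size_map ?map_inj_uniq.
have eq_mem := (uniq_min_size fs_uniq sub size_eq).2.
by apply: uniq_perm; rewrite ?permutations_uniq // => t; rewrite eq_mem.
Qed.

End InjectiveMaps.

Lemma card_superset (T : finType) (A : {set T}) k :
  #|A| <= k <= #|T| -> exists2 B : {set T}, A \subset B & #|B| = k.
Proof.
elim: k => [|k IHk] /andP[Ak kT]; first by exists A => //; apply/eqP; rewrite -leqn0.
have [eqAk | neAk] := eqVneq #|A| k.+1; first by exists A.
have [|B AB cardB] := IHk; first by apply/andP; split; lia.
have /set0Pn[x] : ~: B != set0 by rewrite -cards_eq0; move: (cardsC B) kT; rewrite cardB; lia.
rewrite inE => xB; exists (x |: B); first exact: subset_trans AB (subsetUr _ _).
by rewrite cardsU1 xB cardB.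
Qed.

Lemma exists_embedding n k (s : seq 'I_n) : size s <= k <= n ->
  exists2 f : 'I_k -> 'I_n, injective f & {subset s <= codom f}.
Proof.
case/andP=> sk kn; have [|B sB cardB] := @card_superset _ [set x in s] k.
  by rewrite cardsE card_ord kn andbT (leq_trans (card_size s)).
exists (fun i => enum_val (cast_ord (esym cardB) i)).
  by move=> i j /enum_val_inj /cast_ord_inj.
move=> x xs; have xB : x \in B by apply: (subsetP sB); rewrite inE.
by apply/codomP; exists (cast_ord cardB (enum_rank_in xB x)); rewrite cast_ordK enum_rankK_in.
Qed.

Lemma eq_tuple2 (T : eqType) (t u : 2.-tuple T) :
  (t == u) = (tnth t ord0 == tnth u ord0) && (tnth t ord_max == tnth u ord_max).
Proof.
case: t u => [[|x [|y []]] //= tP] [[|x' [|y' []]] //= uP].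
by rewrite -val_eqE /= !(tnth_nth x) /= !eqseq_cons andbT.
Qed.

Lemma double_bin2 n : 2 * 'C(n, 2) = n * n.-1.
Proof. by case: n => // n; rewrite bin2 -divn2 mulnC divnK // dvdn2 oddM /= andNb. Qed.

Section Restriction.
Variable n : nat.
Implicit Types (pi : 'S_n) (T l : seq 'I_n).

Definition restr pi T : seq 'I_n := [seq x <- perm_seq pi | x \in T].

Definition before pi (a b : 'I_n) : bool := subseq [:: a; b] (perm_seq pi).

Lemma perm_seq_uniq pi : uniq (perm_seq pi).
Proof. by rewrite map_inj_uniq ?enum_uniq //; apply: perm_inj. Qed.

Lemma mem_perm_seq pi x : x \in perm_seq pi.
Proof. by rewrite -[x](permKV pi) map_f ?mem_enum. Qed.

Lemma perm_eq_restr pi T : uniq T -> perm_eq (restr pi T) T.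
Proof.
move=> T_uniq; apply: uniq_perm; rewrite ?filter_uniq ?perm_seq_uniq // => x.
by rewrite mem_filter mem_perm_seq andbT.
Qed.

Lemma subseq_perm_seqE pi T l : perm_eq l T -> subseq l (perm_seq pi) = (l == restr pi T).
Proof.
move=> lT; apply/idP/eqP => [/(subseq_uniqP (perm_seq_uniq pi)) ->|->].
  by apply: eq_filter => x; rewrite /= (perm_mem lT).
exact: filter_subseq.
Qed.

Lemma before_restr pi T a b : a \in T -> b \in T ->
  before pi a b = subseq [:: a; b] (restr pi T).
Proof. by move=> aT bT; rewrite /restr subseq_filter /= aT bT. Qed.

End Restriction.

Local Open Scope ring_scope.

Section GramRowFree.
Variable R : realFieldType.

Lemma mulmx_trmx_ge0 k (v : 'rV[R]_k) : 0 <= (v *m v^T) 0 0.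
Proof. by rewrite mxE; apply: sumr_ge0 => i _; rewrite mxE -expr2 sqr_ge0. Qed.

Lemma mulmx_trmx_eq0 k (v : 'rV[R]_k) : ((v *m v^T) 0 0 == 0) = (v == 0).
Proof.
apply/idP/eqP => [|->]; last by rewrite mul0mx mxE.
rewrite mxE psumr_eq0 => [/allP v0|i _]; last by rewrite mxE -expr2 sqr_ge0.
by apply/rowP => i; have := v0 i (mem_index_enum i); rewrite !mxE mulf_eq0 orbb => /eqP.
Qed.

Lemma gram_row_free m k l (A : 'M[R]_(m, k)) (D : 'M[R]_(m, l)) (c : R) :
  0 < c -> A *m A^T = c *: (1%:M + D *m D^T) -> row_free A.
Proof.
move=> c_gt0 gramA; rewrite -kermx_eq0; apply/rowV0P => v /sub_kermxP vA0.
have : (v *m (A *m A^T) *m v^T) 0 0 = 0 by rewrite mulmxA vA0 !mul0mx mxE.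
rewrite gramA -scalemxAr -scalemxAl mxE mulmxDr mulmx1 mulmxDl mxE !mulmxA.
rewrite -[_ *m D^T *m v^T]mulmxA -trmx_mul => /eqP.
rewrite mulf_eq0 (gt_eqF c_gt0) /= paddr_eq0 ?mulmx_trmx_ge0 // mulmx_trmx_eq0.
by case/andP => /eqP.
Qed.

End GramRowFree.

Lemma sum_delta (R : pzSemiRingType) n (a : 'I_n) (F : 'I_n -> R) :
  \sum_t (a == t)%:R * F t = F a.
Proof.
rewrite (bigD1 a) //= eqxx mul1r big1 ?addr0 // => t /negbTE.
by rewrite eq_sym => ->; rewrite mul0r.
Qed.

Lemma sum_incidence (R : pzRingType) n (a b c d : 'I_n) :
  \sum_t ((a == t)%:R - (b == t)%:R) * ((c == t)%:R - (d == t)%:R) =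
  (a == c)%:R - (a == d)%:R - (b == c)%:R + (b == d)%:R :> R.
Proof.
under eq_bigr => t _ do rewrite mulrBl.
rewrite sumrB !sum_delta !(eq_sym c) !(eq_sym d).
by rewrite opprB addrA addrAC.
Qed.

Section PSCACounting.
Variables (n k lam : nat) (X : seq 'S_n).
Hypothesis X_PSCA : forall kappa, is_kseq k kappa -> count (subseq_of_perm kappa) X = lam.

Lemma sum_restr (R : nmodType) (T : seq 'I_n) (G : seq 'I_n -> R) : uniq T -> size T = k ->
  \sum_(pi <- X) G (restr pi T) = (\sum_(l <- permutations T) G l) *+ lam.
Proof.
move=> T_uniq Tk.
transitivity (\sum_(pi <- X) \sum_(l <- permutations T | l == restr pi T) G l).
  apply: eq_bigr => pi _; rewrite -big_filter filter_pred1_uniq ?permutations_uniq ?big_seq1 //.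
  by rewrite mem_permutations; apply: perm_eq_restr.
rewrite (exchange_big_dep xpredT) //= -sumrMnl; apply: eq_big_seq => l.
rewrite mem_permutations => lT; rewrite big_const_seq iter_addr_0; congr (_ *+ _).
rewrite -(X_PSCA (kappa := l)); last by rewrite /is_kseq (perm_size lT) Tk eqxx (perm_uniq lT) T_uniq.
by apply: eq_count => pi; rewrite /subseq_of_perm (subseq_perm_seqE pi lT).
Qed.

Lemma sum_embedding (R : nmodType) (f : 'I_k -> 'I_n) (G : seq 'I_n -> R) : injective f ->
  \sum_(pi <- X) G (restr pi (codom f)) =
  (\sum_(l <- permutations (enum 'I_k)) G (map f l)) *+ lam.
Proof.
move=> f_inj; rewrite sum_restr ?size_codom ?card_ord //; last first.
  by rewrite codomE map_inj_uniq ?enum_uniq.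
by rewrite (perm_big _ (permutations_map f_inj (enum_uniq _))) big_map.
Qed.

Lemma size_PSCA : (k <= n)%N -> size X = (k`! * lam)%N.
Proof.
move=> kn; have [f f_inj _] := exists_embedding (s := [::]) (k := k) kn.
have := sum_embedding (fun _ => 1%N) f_inj.
rewrite !big_const_seq !count_predT !iter_addr_0 size_permutations ?enum_uniq // size_enum_ord.
by rewrite !natn -mulr_natr natn.
Qed.

End PSCACounting.

Definition bsign {R : pzRingType} (b : bool) : R := if b then 1 else -1.

Definition pair_corr {R : pzRingType} {T : eqType} (a b c d : T) : R :=
  ((a == c) && (b == d))%:R - ((a == d) && (b == c))%:R
  + (a == c)%:R - (a == d)%:R - (b == c)%:R + (b == d)%:R.

Lemma pair_corr_inj {R : pzRingType} (T1 T2 : eqType) (f : T1 -> T2) :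
  injective f -> forall a b c d, pair_corr (f a) (f b) (f c) (f d) = pair_corr a b c d :> R.
Proof. by move=> f_inj a b c d; rewrite /pair_corr !(inj_eq f_inj). Qed.

Lemma pair_corr_ltn (R : pzRingType) n (a b c d : 'I_n) : (a < b)%N -> (c < d)%N ->
  pair_corr a b c d =
  ((a == c) && (b == d))%:R + \sum_t ((a == t)%:R - (b == t)%:R) * ((c == t)%:R - (d == t)%:R)
  :> R.
Proof.
move=> ab cd; rewrite sum_incidence /pair_corr; have -> : (a == d) && (b == c) = false.
  by apply/negbTE/negP => /andP[/eqP ad /eqP bc]; move: ab cd; rewrite ad bc; lia.
by rewrite subr0 !addrA.
Qed.

Lemma enum_ord4 : enum 'I_4 = [:: 0; 1; 2; 3].
Proof. by apply: (inj_map val_inj); rewrite val_enum_ord. Qed.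

Lemma sign_corr_ord4 (R : pzRingType) (i j k m : 'I_4) : i != j -> k != m ->
  \sum_(l <- permutations (enum 'I_4)) bsign (subseq [:: i; j] l) * bsign (subseq [:: k; m] l)
  = pair_corr i j k m *+ 8 :> R.
Proof.
pose corr_ok (i j k m : 'I_4) := (i != j) ==> (k != m) ==>
  (\sum_(l <- permutations (enum 'I_4))
     bsign (subseq [:: i; j] l) * bsign (subseq [:: k; m] l) == pair_corr i j k m *+ 8 :> int).
have table : all (fun i => all (fun j => all (fun k => all (corr_ok i j k)
  (enum 'I_4)) (enum 'I_4)) (enum 'I_4)) (enum 'I_4).
  by rewrite /corr_ok enum_ord4 unlock; vm_compute.
move: table => /allP/(_ i (mem_enum _ i))/allP/(_ j (mem_enum _ j)).
move=> /allP/(_ k (mem_enum _ k))/allP/(_ m (mem_enum _ m)) + ij km.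
rewrite /corr_ok ij km /= => /eqP/(congr1 (fun z : int => z%:~R : R)).
rewrite rmorph_sum rmorphMn /pair_corr !(rmorphB, rmorphD, rmorph_nat) => <-.
by apply: eq_bigr => l _; rewrite rmorphM /bsign; do 2!case: subseq; rewrite ?rmorphN rmorph1.
Qed.

Definition sorted_pairs n := [set t : 2.-tuple 'I_n | sorted ltn (map val t)].

Section SignMatrix.
Variables (n lam : nat) (X : seq 'S_n).
Hypothesis n4 : (4 <= n)%N.
Hypothesis X_PSCA : forall kappa, is_kseq 4 kappa -> count (subseq_of_perm kappa) X = lam.

Lemma sign_corr_PSCA (R : pzRingType) (a b c d : 'I_n) : a != b -> c != d ->
  \sum_(pi <- X) bsign (before pi a b) * bsign (before pi c d) =
  pair_corr a b c d *+ (8 * lam) :> R.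
Proof.
have [f f_inj sub] := exists_embedding (s := [:: a; b; c; d]) (k := 4) n4.
have in_f x : x \in [:: a; b; c; d] -> exists i, x = f i by move/sub/codomP.
have [i ->] : exists i, a = f i by apply: in_f; rewrite !inE eqxx.
have [j ->] : exists j, b = f j by apply: in_f; rewrite !inE eqxx !orbT.
have [k ->] : exists k, c = f k by apply: in_f; rewrite !inE eqxx !orbT.
have [m ->] : exists m, d = f m by apply: in_f; rewrite !inE eqxx !orbT.
rewrite !(inj_eq f_inj) => ij km.
under eq_bigr => pi _ do rewrite !(before_restr pi (codom_f f _) (codom_f f _)).
rewrite (sum_embedding X_PSCA
  (fun l => bsign (subseq [:: f i; f j] l) * bsign (subseq [:: f k; f m] l))) //.
rewrite mulrnA (pair_corr_inj f_inj) -(sign_corr_ord4 _ ij km).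
congr (_ *+ _); apply: eq_bigr => l _.
by rewrite -[[:: f i; f j]]/(map f [:: i; j]) -[[:: f k; f m]]/(map f [:: k; m]) !subseq_map_inj.
Qed.

Variable R : realFieldType.

Definition sign_mx : 'M[R]_(#|sorted_pairs n|, size X) :=
  \matrix_(r, i) bsign (before (nth 1%g X i) (tnth (enum_val r) ord0) (tnth (enum_val r) ord_max)).

Definition incidence_mx : 'M[R]_(#|sorted_pairs n|, n) :=
  \matrix_(r, t) ((tnth (enum_val r) ord0 == t)%:R - (tnth (enum_val r) ord_max == t)%:R).

Lemma sorted_pairs_ltn (r : 'I_#|sorted_pairs n|) :
  (tnth (enum_val r) ord0 < tnth (enum_val r) ord_max)%N.
Proof.
move: (enum_val r) (enum_valP r) => t; rewrite inE.
by case: t => [[|x [|y []]] //= tP]; rewrite /tnth /= andbT.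
Qed.

Lemma sign_mx_gram :
  sign_mx *m sign_mx^T = (8 * lam)%:R *: (1%:M + incidence_mx *m incidence_mx^T).
Proof.
have ne_pair (r : 'I_#|sorted_pairs n|) : tnth (enum_val r) ord0 != tnth (enum_val r) ord_max.
  by apply: contraTneq (sorted_pairs_ltn r) => ->; rewrite ltnn.
apply/matrixP => r s; rewrite !mxE.
transitivity (\sum_(pi <- X) bsign (before pi (tnth (enum_val r) ord0) (tnth (enum_val r) ord_max))
                         * bsign (before pi (tnth (enum_val s) ord0) (tnth (enum_val s) ord_max)) : R).
  by rewrite (big_nth 1%g) big_mkord; apply: eq_bigr => i _; rewrite !mxE.
rewrite sign_corr_PSCA // pair_corr_ltn ?sorted_pairs_ltn //.
rewrite -eq_tuple2 (inj_eq enum_val_inj) mulr_natl.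
by congr ((_ + _) *+ _); apply: eq_bigr => t _; rewrite !mxE.
Qed.

End SignMatrix.

Close Scope ring_scope.

Theorem mainTheorem10 (n : nat) (hn : 4 <= n) (lam : nat) :
  PSCA_exists n 4 lam -> n * (n - 3) <= 48 * lam.
Proof.
move=> [X [lam_gt0 X_PSCA]].
have c_gt0 : (0 < (8 * lam)%:R :> rat)%R by rewrite ltr0n muln_gt0.
have /eqP rank_A := gram_row_free c_gt0 (sign_mx_gram hn X_PSCA rat).
have := rank_leq_col (sign_mx X rat).
rewrite rank_A card_ltn_sorted_tuples (size_PSCA X_PSCA hn) => pairs_le.
have := double_bin2 n; rewrite !factS fact0 in pairs_le; nia.
Qed.
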